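(* In the setting of the two-habitat-type persistence criterion ($m_1=M>1$, $m_2=\dots=m_K=m<1$, $p=\sum_{j\ge2}d_{1j}>0$, assumptions (A1), (A2), (A4)), if $$\mathbb E(S)<\frac{M-1}{Mp(1-m)},$$ then, starting from one individual in patch $1$, the population persists with positive probability.
   Context: Model: $K\ge2$ patches with stochastic dispersal matrix $D=(d_{ij})$; each individual in patch $i$ independently produces offspring distributed as $N_i$ with mean $m_i$, each offspring independently moves from $i$ to $j$ with probability $d_{ij}$. The random disperser $(X_n)$ is the Markov chain with transition matrix $D$, started at $X_0=1$; $\sigma:=\inf\{n\ge0:X_n\ne1\}$ and $S:=\inf\{n\ge0:X_{\sigma+n}=1\}$ (time spent in sinks before next visit to patch 1). Assumptions: (A1) $\mathbb P(N_1=1)<1$; (A2) $\mathbb E N_i<\infty$; (A4) $D$ irreducible. *)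

(* Patches are indexed 0..K-1; index 0 is
   "patch 1" of the paper, indices 1..K-1 are the sinks. *)
From Stdlib Require Import Reals Arith.
Open Scope R_scope.

Definition rsum (K : nat) (f : nat -> R) : R := sum_f_R0 f (Nat.pred K).

Fixpoint Dpow (K : nat) (D : nat -> nat -> R) (n : nat) (i j : nat) : R :=
  match n with
  | O => if Nat.eqb i j then 1 else 0
  | S n' => rsum K (fun k => Dpow K D n' i k * D k j)
  end.

Definition stochastic (K : nat) (D : nat -> nat -> R) : Prop :=
  (forall i j, (i < K)%nat -> (j < K)%nat -> 0 <= D i j) /\
  (forall i, (i < K)%nat -> rsum K (D i) = 1).

Definition irreducible (K : nat) (D : nat -> nat -> R) : Prop :=
  forall i j, (i < K)%nat -> (j < K)%nat -> exists n, 0 < Dpow K D n i j.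

Definition offspring_law (pk : nat -> R) : Prop :=
  (forall k, 0 <= pk k) /\ infinite_sum pk 1.

Definition has_mean (pk : nat -> R) (mu : R) : Prop :=
  infinite_sum (fun k => INR k * pk k) mu.

Definition exit_prob (K : nat) (D : nat -> nat -> R) : R :=
  rsum K (fun j => if Nat.eqb j 0 then 0 else D 0%nat j).

(* hit n j = P_j(T = n) where T = inf{n >= 0 : X_n = patch 1} *)
Fixpoint hit (K : nat) (D : nat -> nat -> R) (n j : nat) : R :=
  match n with
  | O => if Nat.eqb j 0 then 1 else 0
  | S n' => if Nat.eqb j 0 then 0 else rsum K (fun k => D j k * hit K D n' k)
  end.

(* P(S = n) for the random disperser started at patch 1:
   X_sigma has law d_{1j}/p on the sinks, and S is the hitting time of
   patch 1 from X_sigma. *)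
Definition law_S (K : nat) (D : nat -> nat -> R) (n : nat) : R :=
  rsum K (fun j => if Nat.eqb j 0 then 0
                   else D 0%nat j / exit_prob K D * hit K D n j).

(* q n i = P(Z_n = 0 | one individual in patch i at time 0), characterised
   by the first-generation decomposition (branching property):
   q 0 i = 0,  q (n+1) i = E[ (sum_j d_ij q n j)^{N_i} ]. *)
Definition extinction_by (K : nat) (D : nat -> nat -> R)
    (pl : nat -> nat -> R) (q : nat -> nat -> R) : Prop :=
  (forall j, (j < K)%nat -> q 0%nat j = 0) /\
  (forall n i, (i < K)%nat ->
     infinite_sum (fun k => pl i k * (rsum K (fun j => D i j * q n j)) ^ k)
                  (q (S n) i)).

Definition persists_pos_prob (K : nat) (D : nat -> nat -> R)
    (pl : nat -> nat -> R) : Prop :=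
  forall (q : nat -> nat -> R) (ql : R),
    extinction_by K D pl q -> Un_cv (fun n => q n 0%nat) ql -> ql < 1.

From Stdlib Require Import Reals Lia Lra ClassicalEpsilon.
Open Scope R_scope.

(* Linearise the offspring generating functions at 1: if c_i is below the mean
   of N_i, then f_i(1 - x) <= 1 - c_i x for small x >= 0.  Hence a vector w with
   0 <= w <= 1, w_1 > 0 and w_i <= c_i (D w)_i gives, by induction on n,
   P_i(Z_n = 0) <= 1 - eps w_i for a fixed eps > 0, so extinction is not certain.
   On the sinks take c < m close to m and w_j = E_j[c^T; T <= N], T the hitting
   time of patch 1; then w_1 = 1 and w_j <= c (D w)_j.  At patch 1,
   (D w)_1 = 1 - p + p E[c^S; S <= N], which tends to 1 - p (1 - m) E S as c -> m
   and N -> oo, because S is a.s. finite (minimum principle for the harmonic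
   function P_j(T < oo) of the irreducible chain) and c^n >= 1 - n (1 - c).  The
   hypothesis on E S says that M times this limit exceeds 1, so the weight
   c_1 := 1 / (D w)_1 at patch 1 is below M. *)

Lemma Un_cv_const (c : R) : Un_cv (fun _ => c) c.
Proof.
  intros e He; exists 0%nat; intros n _.
  unfold R_dist; rewrite Rminus_diag, Rabs_R0; lra.
Qed.

Lemma Un_cv_shift (u : nat -> R) (l : R) (k : nat) :
  Un_cv u l -> Un_cv (fun n => u (k + n)%nat) l.
Proof.
  intros Hu e He; destruct (Hu e He) as [N HN].
  exists N; intros n Hn; apply HN; lia.
Qed.

Lemma Rle_cv_lim_eventually (u v : nat -> R) (a b : R) (N : nat) :
  (forall n, (N <= n)%nat -> u n <= v n) -> Un_cv u a -> Un_cv v b -> a <= b.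
Proof.
  intros Huv Hu Hv.
  apply (@Rle_cv_lim (fun n => u (N + n)%nat) (fun n => v (N + n)%nat));
    [intros n; apply Huv; lia | apply Un_cv_shift ..]; assumption.
Qed.

Lemma infinite_sum_nonneg (f : nat -> R) (l : R) :
  (forall k, 0 <= f k) -> infinite_sum f l -> 0 <= l.
Proof.
  intros Hf Hl; apply Rle_trans with (sum_f_R0 f 0); [apply Hf | apply sum_incr; auto].
Qed.

Lemma sum_f_R0_nonneg (f : nat -> R) (A : nat) :
  (forall i, (i <= A)%nat -> 0 <= f i) -> 0 <= sum_f_R0 f A.
Proof.
  induction A as [|A IH]; intros Hf; simpl; [apply Hf; lia|].
  pose proof (IH (fun i Hi => Hf i ltac:(lia))); pose proof (Hf (S A) (le_n _)); lra.
Qed.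

Lemma sum_f_R0_term_le (f : nat -> R) (A k : nat) :
  (forall i, (i <= A)%nat -> 0 <= f i) -> (k <= A)%nat -> f k <= sum_f_R0 f A.
Proof.
  induction A as [|A IH]; intros Hf Hk; simpl.
  - replace k with 0%nat by lia; lra.
  - pose proof (Hf (S A) (le_n _)).
    destruct (Nat.eq_dec k (S A)) as [->|Hne].
    + pose proof (sum_f_R0_nonneg f A (fun i Hi => Hf i ltac:(lia))); lra.
    + pose proof (IH (fun i Hi => Hf i ltac:(lia)) ltac:(lia)); lra.
Qed.

Lemma sum_f_R0_pos_term (f : nat -> R) (A : nat) :
  0 < sum_f_R0 f A -> exists k, (k <= A)%nat /\ 0 < f k.
Proof.
  induction A as [|A IH]; simpl; intros H; [exists 0%nat; split; auto|].
  destruct (Rlt_le_dec 0 (f (S A))) as [Hp|Hn]; [exists (S A); split; auto|].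
  destruct IH as [k [Hk Hfk]]; [lra | exists k; split; auto].
Qed.

Lemma sum_f_R0_eventually_zero (f : nat -> R) (L N : nat) :
  (forall k, (L < k)%nat -> f k = 0) -> (L <= N)%nat -> sum_f_R0 f N = sum_f_R0 f L.
Proof.
  intros Hf HN; induction N as [|N IH]; [replace L with 0%nat by lia; reflexivity|].
  destruct (Nat.eq_dec (S N) L) as [<-|]; [reflexivity|].
  simpl; rewrite IH, (Hf (S N)) by lia; ring.
Qed.

Lemma sum_f_R0_swap (f : nat -> nat -> R) (A N : nat) :
  sum_f_R0 (fun n => sum_f_R0 (f n) A) N = sum_f_R0 (fun k => sum_f_R0 (fun n => f n k) N) A.
Proof.
  induction N as [|N IH]; simpl; [reflexivity|].
  rewrite IH, <- plus_sum; reflexivity.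
Qed.

Lemma Un_cv_sum_f_R0 (u : nat -> nat -> R) (l : nat -> R) (A : nat) :
  (forall k, (k <= A)%nat -> Un_cv (fun n => u n k) (l k)) ->
  Un_cv (fun n => sum_f_R0 (u n) A) (sum_f_R0 l A).
Proof.
  induction A as [|A IH]; intros H; simpl; [apply H; lia|].
  apply CV_plus; [apply IH; intros; apply H | apply H]; lia.
Qed.

Lemma finite_argmin (r : nat -> R) (A : nat) :
  exists j, (j <= A)%nat /\ forall k, (k <= A)%nat -> r j <= r k.
Proof.
  induction A as [|A [j [Hj Hmin]]].
  - exists 0%nat; split; [lia|]; intros k Hk; replace k with 0%nat by lia; lra.
  - destruct (Rle_lt_dec (r j) (r (S A))).
    + exists j; split; [lia|]; intros k Hk.
      destruct (Nat.eq_dec k (S A)) as [->|]; [assumption | apply Hmin; lia].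
    + exists (S A); split; [lia|]; intros k Hk.
      destruct (Nat.eq_dec k (S A)) as [->|]; [lra|].
      pose proof (Hmin k ltac:(lia)); lra.
Qed.

Lemma finite_common_delta (P : nat -> R -> Prop) (A : nat) :
  (forall i d d', 0 < d' <= d -> P i d -> P i d') ->
  (forall i, (i <= A)%nat -> exists d, 0 < d /\ P i d) ->
  exists d, 0 < d /\ forall i, (i <= A)%nat -> P i d.
Proof.
  intros Hmono; induction A as [|A IH]; intros H.
  - destruct (H 0%nat (le_n 0)) as [d [Hd HP]].
    exists d; split; [assumption|]; intros i Hi; replace i with 0%nat by lia; assumption.
  - destruct IH as [d1 [Hd1 HP1]]; [intros; apply H; lia|].
    destruct (H (S A) (le_n _)) as [d2 [Hd2 HP2]].
    assert (Hmin : 0 < Rmin d1 d2) by (apply Rmin_pos; assumption).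
    exists (Rmin d1 d2); split; [assumption|]; intros i Hi.
    destruct (Nat.eq_dec i (S A)) as [->|].
    + apply Hmono with d2; [split; [assumption | apply Rmin_r] | assumption].
    + apply Hmono with d1; [split; [assumption | apply Rmin_l] | apply HP1; lia].
Qed.

Lemma pow_one_sub_le_quadratic (x : R) (k : nat) :
  0 <= x <= 1 -> (1 - x) ^ k <= 1 - INR k * x + INR k ^ 2 * x ^ 2.
Proof.
  intros Hx; induction k as [|k IH]; [simpl; lra|].
  rewrite S_INR; simpl pow in *; pose proof (pos_INR k).
  assert ((1 - x) * (1 - x) ^ k <= (1 - x) * (1 - INR k * x + INR k * (INR k * 1) * (x * (x * 1))))
    by (apply Rmult_le_compat_l; lra).
  assert (0 <= INR k * INR k * x * x * x) by (repeat apply Rmult_le_pos; lra).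
  nra.
Qed.

Lemma pow_ge_one_sub_mul (c : R) (n : nat) : 0 <= c <= 1 -> 1 - INR n * (1 - c) <= c ^ n.
Proof.
  intros Hc; induction n as [|n IH]; [simpl; lra|].
  rewrite S_INR; simpl pow.
  assert (c ^ n <= 1) by (rewrite <- (pow1 n); apply pow_incr; lra).
  nra.
Qed.

Definition pgf_below_line (p : nat -> R) (c d : R) : Prop :=
  forall x, 0 <= x <= d ->
    exists V, infinite_sum (fun k => p k * (1 - x) ^ k) V /\ V <= 1 - c * x.

Lemma pgf_term_bounds (p : nat -> R) (x : R) (k : nat) :
  offspring_law p -> 0 <= x <= 1 -> 0 <= p k * (1 - x) ^ k <= p k.
Proof.
  intros [Hp _] Hx; pose proof (Hp k).
  assert ((1 - x) ^ k <= 1) by (rewrite <- (pow1 k) at 2; apply pow_incr; lra).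
  split; [apply Rmult_le_pos; [|apply pow_le; lra]; lra |].
  rewrite <- (Rmult_1_r (p k)) at 2; apply Rmult_le_compat_l; lra.
Qed.

Lemma pgf_converges (p : nat -> R) (x : R) :
  offspring_law p -> 0 <= x <= 1 -> exists V, infinite_sum (fun k => p k * (1 - x) ^ k) V.
Proof.
  intros Hp Hx.
  destruct (Rseries_CV_comp (fun k => p k * (1 - x) ^ k) p) as [V HV];
    [intros k; apply pgf_term_bounds; assumption | exists 1; apply Hp | exists V; exact HV].
Qed.

Lemma pgf_le_1 (p : nat -> R) (x V : R) :
  offspring_law p -> 0 <= x <= 1 -> infinite_sum (fun k => p k * (1 - x) ^ k) V -> V <= 1.
Proof.
  intros Hp Hx HV; apply (Rle_cv_lim_eventually _ _ _ _ 0 (fun n _ => sum_growing _ _ n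
    (fun k => proj2 (pgf_term_bounds p x k Hp Hx))) HV (proj2 Hp)).
Qed.

Lemma pgf_le_truncated_mean (p : nat -> R) (x V : R) (L : nat) :
  offspring_law p -> 0 <= x <= 1 -> infinite_sum (fun k => p k * (1 - x) ^ k) V ->
  V <= 1 - x * sum_f_R0 (fun k => INR k * p k) L + INR L ^ 2 * x ^ 2.
Proof.
  intros Hp Hx HV; pose proof (proj1 Hp) as Hp0.
  set (l2 := INR L ^ 2).
  set (g := fun k => if (k <=? L)%nat then INR k * x - l2 * x ^ 2 else 0).
  assert (Hterm : forall k, p k * (1 - x) ^ k <= p k - p k * g k).
  { intros k; unfold g; destruct (k <=? L)%nat eqn:E.
    - apply Nat.leb_le in E.
      assert (INR k ^ 2 <= l2) by (apply pow_incr; split; [apply pos_INR | apply le_INR; lia]).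
      pose proof (pow_one_sub_le_quadratic x k Hx); pose proof (Hp0 k).
      assert (0 <= x ^ 2) by (apply pow_le; lra).
      assert ((1 - x) ^ k <= 1 - (INR k * x - l2 * x ^ 2)) by nra.
      nra.
    - pose proof (proj2 (pgf_term_bounds p x k Hp Hx)); lra. }
  set (B := sum_f_R0 (fun k => p k * g k) L).
  assert (HB : B = x * sum_f_R0 (fun k => INR k * p k) L - l2 * x ^ 2 * sum_f_R0 p L).
  { unfold B; rewrite !scal_sum, <- minus_sum; apply sum_eq; intros k Hk.
    unfold g; rewrite (proj2 (Nat.leb_le k L) Hk); ring. }
  assert (HVB : V <= 1 - B).
  { apply (Rle_cv_lim_eventually (sum_f_R0 (fun k => p k * (1 - x) ^ k))
                                  (fun n => sum_f_R0 p n - B) _ _ L);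
      [| exact HV | apply CV_minus; [apply Hp | apply Un_cv_const]].
    intros n Hn; unfold B.
    rewrite <- (sum_f_R0_eventually_zero (fun k => p k * g k) L n), <- minus_sum;
      [apply sum_growing; exact Hterm | | exact Hn].
    intros k Hk; unfold g; rewrite (proj2 (Nat.leb_gt k L) Hk); ring. }
  assert (HpL : sum_f_R0 p L <= 1) by (apply sum_incr; [apply Hp | exact Hp0]).
  assert (0 <= l2 * x ^ 2) by (apply Rmult_le_pos; apply pow_le; [apply pos_INR | lra]).
  assert (0 <= sum_f_R0 p L) by (apply cond_pos_sum; exact Hp0).
  rewrite HB in HVB; fold l2; nra.
Qed.

Lemma pgf_below_line_of_lt_mean (p : nat -> R) (mu c : R) :
  offspring_law p -> has_mean p mu -> c <= 0 \/ c < mu ->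
  exists d, 0 < d /\ pgf_below_line p c d.
Proof.
  intros Hp Hmu [Hc | Hc].
  - exists 1; split; [lra|]; intros x Hx.
    destruct (pgf_converges p x Hp Hx) as [V HV]; exists V; split; [exact HV|].
    pose proof (pgf_le_1 p x V Hp Hx HV); nra.
  - destruct (Hmu ((mu - c) / 2) ltac:(lra)) as [L HL].
    specialize (HL L (le_n _)); unfold R_dist in HL; apply Rabs_def2 in HL.
    set (l2 := INR L ^ 2).
    assert (Hl2 : 0 <= l2) by (apply pow_le, pos_INR).
    exists (Rmin 1 ((mu - c) / (2 * (l2 + 1)))); split.
    { apply Rmin_pos; [lra | apply Rdiv_lt_0_compat; lra]. }
    intros x [Hx0 Hxd].
    assert (Hx1 : x <= 1) by (eapply Rle_trans; [exact Hxd | apply Rmin_l]).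
    assert (Hx2 : x * (2 * (l2 + 1)) <= mu - c).
    { apply (Rmult_le_compat_r (2 * (l2 + 1))) in Hxd; [|lra].
      eapply Rle_trans; [exact Hxd|].
      eapply Rle_trans; [apply Rmult_le_compat_r; [lra | apply Rmin_r]|].
      right; field; lra. }
    destruct (pgf_converges p x Hp (conj Hx0 Hx1)) as [V HV]; exists V; split; [exact HV|].
    pose proof (pgf_le_truncated_mean p x V L Hp (conj Hx0 Hx1) HV); fold l2 in H.
    nra.
Qed.

Lemma has_mean_nonneg (p : nat -> R) (mu : R) : offspring_law p -> has_mean p mu -> 0 <= mu.
Proof.
  intros [Hp _]; apply infinite_sum_nonneg; intros k.
  apply Rmult_le_pos; [apply pos_INR | apply Hp].
Qed.

Definition Dmulv (K : nat) (D : nat -> nat -> R) (w : nat -> R) (i : nat) : R :=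
  rsum K (fun k => D i k * w k).

Definition hit_gf (K : nat) (D : nat -> nat -> R) (c : R) (N j : nat) : R :=
  sum_f_R0 (fun n => c ^ n * hit K D n j) N.

Section Disperser.

Variables (K : nat) (D : nat -> nat -> R).
Hypotheses (HK : (1 <= K)%nat) (HS : stochastic K D).

Lemma rsum_le (f g : nat -> R) :
  (forall i, (i < K)%nat -> f i <= g i) -> rsum K f <= rsum K g.
Proof. intros H; apply sum_Rle; intros i Hi; apply H; lia. Qed.

Lemma rsum_nonneg (f : nat -> R) : (forall i, (i < K)%nat -> 0 <= f i) -> 0 <= rsum K f.
Proof. intros H; apply sum_f_R0_nonneg; intros i Hi; apply H; lia. Qed.

Lemma D_nonneg i j : (i < K)%nat -> (j < K)%nat -> 0 <= D i j.
Proof. apply (proj1 HS). Qed.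

Lemma Dmulv_le (u v : nat -> R) i :
  (i < K)%nat -> (forall k, (k < K)%nat -> u k <= v k) -> Dmulv K D u i <= Dmulv K D v i.
Proof.
  intros Hi H; apply rsum_le; intros k Hk.
  apply Rmult_le_compat_l; [apply D_nonneg | apply H]; assumption.
Qed.

Lemma Dmulv_nonneg (w : nat -> R) i :
  (i < K)%nat -> (forall k, (k < K)%nat -> 0 <= w k) -> 0 <= Dmulv K D w i.
Proof.
  intros Hi H; apply rsum_nonneg; intros k Hk.
  apply Rmult_le_pos; [apply D_nonneg | apply H]; assumption.
Qed.

Lemma Dmulv_affine (w : nat -> R) (a b : R) i :
  (i < K)%nat -> Dmulv K D (fun k => a * w k + b) i = a * Dmulv K D w i + b.
Proof.
  intros Hi; unfold Dmulv; rewrite <- (Rmult_1_r b) at 1; rewrite <- (proj2 HS i Hi).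
  unfold rsum; rewrite !scal_sum, <- plus_sum; apply sum_eq; intros; ring.
Qed.

Lemma Dmulv_unit_interval (w : nat -> R) i :
  (i < K)%nat -> (forall k, (k < K)%nat -> 0 <= w k <= 1) -> 0 <= Dmulv K D w i <= 1.
Proof.
  intros Hi H; split; [apply Dmulv_nonneg; [|intros k Hk; apply H]; assumption|].
  replace 1 with (Dmulv K D (fun k => 0 * w k + 1) i)
    by (rewrite Dmulv_affine; [ring | assumption]).
  apply Dmulv_le; [assumption|]; intros k Hk; pose proof (H k Hk); lra.
Qed.

Lemma hit_nonneg n j : (j < K)%nat -> 0 <= hit K D n j.
Proof.
  revert j; induction n as [|n IH]; intros j Hj; simpl; destruct (Nat.eqb j 0); try lra.
  apply Dmulv_nonneg; assumption.
Qed.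

Lemma hit_gf_root c N : hit_gf K D c N 0 = 1.
Proof. unfold hit_gf; induction N as [|N IH]; simpl in *; [ring | rewrite IH; ring]. Qed.

Lemma hit_gf_succ_sink c N j :
  (0 < j)%nat -> hit_gf K D c (S N) j = c * Dmulv K D (hit_gf K D c N) j.
Proof.
  intros Hj; unfold hit_gf, Dmulv, rsum.
  rewrite decomp_sum by lia; simpl hit.
  replace (Nat.eqb j 0) with false by (symmetry; apply Nat.eqb_neq; lia).
  rewrite Rmult_0_r, Rplus_0_l, scal_sum.
  transitivity (sum_f_R0 (fun n =>
    sum_f_R0 (fun k => c * (D j k * (c ^ n * hit K D n k))) (pred K)) N).
  - apply sum_eq; intros n _; unfold rsum; rewrite scal_sum; apply sum_eq; intros; simpl; ring.
  - rewrite sum_f_R0_swap; apply sum_eq; intros k _.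
    replace (D j k * _ * c) with (c * D j k * sum_f_R0 (fun n => c ^ n * hit K D n k) N) by ring.
    rewrite scal_sum; apply sum_eq; intros; ring.
Qed.

Lemma hit_gf_le_succ c N j :
  0 <= c -> (j < K)%nat -> hit_gf K D c N j <= hit_gf K D c (S N) j.
Proof.
  intros Hc Hj; unfold hit_gf; rewrite tech5.
  pose proof (hit_nonneg (S N) j Hj); pose proof (pow_le c (S N) Hc).
  assert (0 <= c ^ S N * hit K D (S N) j) by (apply Rmult_le_pos; assumption); lra.
Qed.

Lemma hit_gf_unit_interval c N j :
  0 <= c <= 1 -> (j < K)%nat -> 0 <= hit_gf K D c N j <= 1.
Proof.
  intros Hc; revert j; induction N as [|N IH]; intros j Hj.
  - unfold hit_gf; simpl; destruct (Nat.eqb j 0); lra.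
  - destruct j as [|j]; [rewrite hit_gf_root; lra|].
    rewrite hit_gf_succ_sink by lia.
    pose proof (Dmulv_unit_interval (hit_gf K D c N) (S j) Hj IH); split; nra.
Qed.

Lemma hit_gf_sink_le c N j :
  0 <= c -> (0 < j < K)%nat -> hit_gf K D c N j <= c * Dmulv K D (hit_gf K D c N) j.
Proof.
  intros Hc Hj; rewrite <- hit_gf_succ_sink by lia; apply hit_gf_le_succ; [assumption | lia].
Qed.

Lemma law_S_nonneg n : 0 < exit_prob K D -> 0 <= law_S K D n.
Proof.
  intros Hp; apply rsum_nonneg; intros j Hj; destruct (Nat.eqb j 0); [lra|].
  apply Rmult_le_pos; [apply Rmult_le_pos | apply hit_nonneg; lia].
  - apply D_nonneg; lia.
  - left; apply Rinv_0_lt_compat; assumption.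
Qed.

Lemma law_S_gf c N :
  sum_f_R0 (fun n => c ^ n * law_S K D n) N =
  rsum K (fun j => if Nat.eqb j 0 then 0 else D 0%nat j / exit_prob K D * hit_gf K D c N j).
Proof.
  unfold law_S, rsum, hit_gf.
  transitivity (sum_f_R0 (fun n => sum_f_R0 (fun j => if Nat.eqb j 0 then 0
                  else D 0%nat j / exit_prob K D * (c ^ n * hit K D n j)) (pred K)) N).
  - apply sum_eq; intros n _; rewrite scal_sum; apply sum_eq; intros j _.
    destruct (Nat.eqb j 0); ring.
  - rewrite sum_f_R0_swap; apply sum_eq; intros j _; destruct (Nat.eqb j 0).
    + clear; induction N; simpl; lra.
    + rewrite scal_sum; apply sum_eq; intros; ring.
Qed.

Lemma Dmulv_hit_gf_root c N :
  0 < exit_prob K D ->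
  Dmulv K D (hit_gf K D c N) 0 =
  1 - exit_prob K D + exit_prob K D * sum_f_R0 (fun n => c ^ n * law_S K D n) N.
Proof.
  intros Hp; rewrite law_S_gf, <- (proj2 HS 0%nat ltac:(lia)).
  unfold Dmulv, exit_prob, rsum in *; rewrite scal_sum, <- minus_sum, <- plus_sum.
  apply sum_eq; intros k _; destruct (Nat.eqb k 0) eqn:E.
  - apply Nat.eqb_eq in E; subst; rewrite hit_gf_root; ring.
  - field; lra.
Qed.

Lemma law_S_gf_ge c N ES :
  0 < exit_prob K D -> 0 <= c <= 1 -> infinite_sum (fun n => INR n * law_S K D n) ES ->
  sum_f_R0 (law_S K D) N - (1 - c) * ES <= sum_f_R0 (fun n => c ^ n * law_S K D n) N.
Proof.
  intros Hp Hc HES.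
  assert (Hmean : sum_f_R0 (fun n => INR n * law_S K D n) N <= ES).
  { apply sum_incr; [exact HES|]; intros n.
    apply Rmult_le_pos; [apply pos_INR | apply law_S_nonneg; assumption]. }
  assert (Hterm : sum_f_R0 (fun n => law_S K D n - (1 - c) * (INR n * law_S K D n)) N
                  <= sum_f_R0 (fun n => c ^ n * law_S K D n) N).
  { apply sum_Rle; intros n _.
    pose proof (pow_ge_one_sub_mul c n Hc); pose proof (law_S_nonneg n Hp); nra. }
  rewrite minus_sum in Hterm.
  replace (sum_f_R0 (fun n => (1 - c) * (INR n * law_S K D n)) N)
    with ((1 - c) * sum_f_R0 (fun n => INR n * law_S K D n) N) in Hterm
    by (rewrite scal_sum; apply sum_eq; intros; ring).
  assert (0 <= 1 - c) by lra.
  nra.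
Qed.

Lemma Dpow_nonneg n i j : (i < K)%nat -> (j < K)%nat -> 0 <= Dpow K D n i j.
Proof.
  revert j; induction n as [|n IH]; intros j Hi' Hj; simpl; [destruct (Nat.eqb i j); lra|].
  apply rsum_nonneg; intros k Hk; apply Rmult_le_pos; [apply IH | apply D_nonneg]; assumption.
Qed.

Lemma Dpow_succ_pos n i j :
  (i < K)%nat -> (j < K)%nat -> 0 < Dpow K D (S n) i j ->
  exists l, (l < K)%nat /\ 0 < Dpow K D n i l /\ 0 < D l j.
Proof.
  intros Hi Hj Hpos; apply sum_f_R0_pos_term in Hpos as [l [Hl Hlj]].
  exists l; split; [lia|].
  pose proof (Dpow_nonneg n i l Hi ltac:(lia)); pose proof (D_nonneg l j ltac:(lia) Hj).
  change (0 < Dpow K D n i l * D l j) in Hlj; split; nra.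
Qed.

Hypothesis HI : irreducible K D.

Section MinimumPrinciple.

Variable h : nat -> R.
Hypothesis Hharm : forall j, (0 < j < K)%nat -> h j = Dmulv K D h j.

Lemma harmonic_min_spreads mn j k :
  (forall i, (i < K)%nat -> mn <= h i) -> (0 < j < K)%nat -> (k < K)%nat ->
  h j = mn -> 0 < D j k -> h k = mn.
Proof.
  intros Hmin Hj Hk Hjmn Hjk.
  assert (Hzero : Dmulv K D (fun i => 1 * h i + - mn) j = 0)
    by (rewrite Dmulv_affine, <- Hharm, Hjmn by lia; ring).
  assert (Hterm : D j k * (1 * h k + - mn) <= 0).
  { rewrite <- Hzero.
    apply (sum_f_R0_term_le (fun i => D j i * (1 * h i + - mn))); [|lia].
    intros i Hi; pose proof (Hmin i ltac:(lia)).
    apply Rmult_le_pos; [apply D_nonneg; lia | lra]. }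
  pose proof (Hmin k Hk); nra.
Qed.

Lemma harmonic_min_at_root j : (j < K)%nat -> h 0%nat <= h j.
Proof.
  intros Hj; destruct (finite_argmin h (pred K)) as [js [Hjs Hmin]].
  assert (Hmin' : forall i, (i < K)%nat -> h js <= h i) by (intros i Hi; apply Hmin; lia).
  assert (Hreach : forall n k, (k < K)%nat -> 0 < Dpow K D n js k -> h k = h js \/ h 0%nat = h js).
  { induction n as [|n IH]; intros k Hk Hpos.
    - simpl in Hpos; destruct (Nat.eqb js k) eqn:E; [apply Nat.eqb_eq in E; left; congruence | lra].
    - destruct (Dpow_succ_pos n js k ltac:(lia) Hk Hpos) as [l [Hl [Hpl Hlk]]].
      destruct (IH l Hl Hpl) as [Hhl | H0]; [|right; exact H0].
      destruct l as [|l]; [right; exact Hhl|].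
      left; apply (harmonic_min_spreads (h js) (S l)); auto; lia. }
  destruct (HI js 0%nat ltac:(lia) ltac:(lia)) as [n Hn].
  destruct (Hreach n 0%nat ltac:(lia) Hn) as [H0 | H0]; rewrite H0; apply Hmin'; exact Hj.
Qed.

End MinimumPrinciple.

Definition return_prob (j : nat) : R :=
  epsilon (inhabits 0) (fun l => Un_cv (fun N => hit_gf K D 1 N j) l).

Lemma return_prob_spec j : (j < K)%nat -> Un_cv (fun N => hit_gf K D 1 N j) (return_prob j).
Proof.
  intros Hj; unfold return_prob; apply epsilon_spec.
  destruct (growing_cv (fun N => hit_gf K D 1 N j)) as [l Hl]; [| |exists l; exact Hl].
  - intros N; apply hit_gf_le_succ; [lra | exact Hj].
  - exists 1; intros x [N ->]; apply hit_gf_unit_interval; [lra | exact Hj].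
Qed.

Lemma return_prob_root : return_prob 0%nat = 1.
Proof.
  apply (UL_sequence (fun N => hit_gf K D 1 N 0)); [apply return_prob_spec; lia|].
  apply (Un_cv_ext (fun _ => 1)); [intros N; symmetry; apply hit_gf_root | apply Un_cv_const].
Qed.

Lemma return_prob_harmonic j : (0 < j < K)%nat -> return_prob j = Dmulv K D return_prob j.
Proof.
  intros Hj; apply (UL_sequence (fun N => hit_gf K D 1 (S N) j)).
  - apply (Un_cv_shift _ _ 1), return_prob_spec; lia.
  - apply (Un_cv_ext (fun N => Dmulv K D (hit_gf K D 1 N) j)).
    + intros N; rewrite (hit_gf_succ_sink 1 N j) by lia; ring.
    + apply Un_cv_sum_f_R0; intros k Hk.
      apply (CV_mult (fun _ => D j k)); [apply Un_cv_const | apply return_prob_spec; lia].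
Qed.

Lemma return_prob_eq_1 j : (j < K)%nat -> return_prob j = 1.
Proof.
  intros Hj; apply Rle_antisym.
  - refine (Rle_cv_lim _ (return_prob_spec j Hj) (Un_cv_const 1)).
    intros N; apply hit_gf_unit_interval; [lra | exact Hj].
  - rewrite <- return_prob_root.
    apply harmonic_min_at_root; [exact return_prob_harmonic | exact Hj].
Qed.

Lemma law_S_total : 0 < exit_prob K D -> infinite_sum (law_S K D) 1.
Proof.
  intros Hp.
  assert (Hmass : rsum K (fun j => if Nat.eqb j 0 then 0
                    else D 0%nat j / exit_prob K D * return_prob j) = 1).
  { transitivity (rsum K (fun j => if Nat.eqb j 0 then 0 else D 0%nat j) * / exit_prob K D);
      [|change (rsum K _) with (exit_prob K D); field; lra].
    unfold rsum; rewrite (Rmult_comm (sum_f_R0 _ _)), scal_sum; apply sum_eq; intros j Hj.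
    destruct (Nat.eqb j 0); [ring|].
    rewrite return_prob_eq_1 by lia; unfold Rdiv; ring. }
  rewrite <- Hmass.
  apply (Un_cv_ext (fun N => rsum K (fun j => if Nat.eqb j 0 then 0
                       else D 0%nat j / exit_prob K D * hit_gf K D 1 N j))).
  { intros N; rewrite <- law_S_gf; apply sum_eq; intros; rewrite pow1; ring. }
  apply Un_cv_sum_f_R0; intros k Hk; destruct (Nat.eqb k 0); [apply Un_cv_const|].
  apply (CV_mult (fun _ => _)); [apply Un_cv_const | apply return_prob_spec; lia].
Qed.

Lemma discounted_exit_weight (m ES delta : R) :
  0 <= m < 1 -> 0 < exit_prob K D -> infinite_sum (fun n => INR n * law_S K D n) ES ->
  0 < delta ->
  exists c N, 0 <= c <= 1 /\ (c <= 0 \/ c < m) /\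
    1 - exit_prob K D * (1 - m) * ES - delta <= Dmulv K D (hit_gf K D c N) 0.
Proof.
  intros Hm Hp HES Hdelta; set (p := exit_prob K D) in *.
  assert (HES0 : 0 <= ES).
  { refine (infinite_sum_nonneg _ _ _ HES); intros n.
    apply Rmult_le_pos; [apply pos_INR | apply law_S_nonneg, Hp]. }
  set (a := p * m * ES).
  assert (Ha : 0 <= a) by (apply Rmult_le_pos; [apply Rmult_le_pos|]; lra).
  (* The discount c = m r costs p (m - c) ES = a (1 - r) <= delta / 2,
     and c < m as soon as m > 0. *)
  set (r := 2 * a / (2 * a + delta)).
  assert (Hr : 0 <= r < 1).
  { unfold r; split; [apply Rmult_le_pos; [lra | left; apply Rinv_0_lt_compat; lra]|].
    apply Rmult_lt_reg_r with (2 * a + delta); [lra|]; field_simplify; lra. }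
  assert (Hloss : a * (1 - r) <= delta / 2).
  { unfold r; apply Rmult_le_reg_r with (2 * (2 * a + delta)); [lra|].
    field_simplify; nra. }
  exists (m * r).
  destruct (law_S_total Hp (delta / (2 * p)) ltac:(apply Rdiv_lt_0_compat; lra)) as [N HN].
  specialize (HN N (le_n _)); unfold R_dist in HN; apply Rabs_def2 in HN.
  exists N; split; [split; nra|split].
  { destruct (Rle_lt_or_eq_dec 0 m (proj1 Hm)) as [Hm0 | <-]; [right; nra | left; lra]. }
  rewrite Dmulv_hit_gf_root by exact Hp.
  pose proof (law_S_gf_ge (m * r) N ES Hp ltac:(split; nra) HES) as Hgf.
  assert (HpN : p * (1 - sum_f_R0 (law_S K D) N) <= delta / 2).
  { apply Rmult_le_reg_r with (/ p); [apply Rinv_0_lt_compat; lra|].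
    replace (delta / 2 * / p) with (delta / (2 * p)) by (field; lra).
    field_simplify; lra. }
  assert (Hsplit : p * (1 - m * r) * ES = p * (1 - m) * ES + a * (1 - r)) by (unfold a; ring).
  apply Rmult_le_compat_l with (r := p) in Hgf; [|lra].
  fold p; lra.
Qed.

End Disperser.

Section Persistence.

Variables (K : nat) (D : nat -> nat -> R) (pl : nat -> nat -> R).
Hypotheses (HK : (1 <= K)%nat) (HS : stochastic K D)
  (Hlaw : forall i, (i < K)%nat -> offspring_law (pl i)).
Variables (w c : nat -> R).
Hypotheses (Hw : forall j, (j < K)%nat -> 0 <= w j <= 1)
  (Hsub : forall i, (i < K)%nat -> w i <= c i * Dmulv K D w i).

Lemma extinction_by_below (q : nat -> nat -> R) (d : R) :
  extinction_by K D pl q -> 0 < d ->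
  (forall i, (i < K)%nat -> pgf_below_line (pl i) (c i) d) ->
  forall n j, (j < K)%nat -> 0 <= q n j <= 1 - Rmin d 1 * w j.
Proof.
  intros [Hq0 Hqs] Hd Hpgf; set (eps := Rmin d 1).
  assert (Heps : 0 < eps <= 1) by (split; [apply Rmin_pos; lra | apply Rmin_r]).
  assert (Hepsd : eps <= d) by apply Rmin_l.
  induction n as [|n IH]; intros j Hj.
  { rewrite Hq0 by exact Hj; pose proof (Hw j Hj); split; nra. }
  pose proof (Dmulv_unit_interval K D HK HS w j Hj Hw) as Hy.
  set (x := eps * Dmulv K D w j).
  assert (Hsv : 0 <= Dmulv K D (q n) j <= 1 - x).
  { split; [apply Dmulv_nonneg; auto; intros k Hk; apply IH, Hk|].
    unfold x; replace (1 - eps * Dmulv K D w j) with (Dmulv K D (fun k => - eps * w k + 1) j)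
      by (rewrite Dmulv_affine; auto; ring).
    apply Dmulv_le; auto; intros k Hk; pose proof (IH k Hk); lra. }
  destruct (Hpgf j Hj x ltac:(unfold x; split; nra)) as [V [HV HVline]].
  pose proof (Hqs n j Hj) as Hqn; pose proof (proj1 (Hlaw j Hj)) as Hpl.
  split.
  - refine (infinite_sum_nonneg _ _ _ Hqn); intros k.
    apply Rmult_le_pos; [apply Hpl | apply pow_le, Hsv].
  - apply Rle_trans with V.
    + refine (Rle_cv_lim _ Hqn HV); intros N; apply sum_Rle; intros k _.
      apply Rmult_le_compat_l; [apply Hpl | apply pow_incr, Hsv].
    + assert (eps * w j <= eps * (c j * Dmulv K D w j))
        by (apply Rmult_le_compat_l; [lra | apply Hsub, Hj]).
      unfold x in HVline; lra.
Qed.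

Theorem persists_of_subsolution :
  (forall i, (i < K)%nat -> exists mu, has_mean (pl i) mu /\ (c i <= 0 \/ c i < mu)) ->
  0 < w 0%nat -> persists_pos_prob K D pl.
Proof.
  intros Hmean Hw0 q ql Hq Hcv.
  destruct (finite_common_delta (fun i d => pgf_below_line (pl i) (c i) d) (pred K))
    as [d [Hd Hpgf]].
  { intros i d d' Hd' H x Hx; apply H; lra. }
  { intros i Hi; destruct (Hmean i ltac:(lia)) as [mu [Hmu Hc]].
    apply (pgf_below_line_of_lt_mean _ mu); [apply Hlaw; lia | exact Hmu | exact Hc]. }
  assert (Hbound : ql <= 1 - Rmin d 1 * w 0%nat).
  { refine (Rle_cv_lim _ Hcv (Un_cv_const _)); intros n.
    apply (extinction_by_below q d Hq Hd); [intros i Hi; apply Hpgf | ]; lia. }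
  assert (0 < Rmin d 1) by (apply Rmin_pos; lra).
  nra.
Qed.

End Persistence.

Lemma inv_lt_of_mean_sojourn_lt (M m p ES : R) :
  1 < M -> m < 1 -> 0 < p -> ES < (M - 1) / (M * p * (1 - m)) -> / M < 1 - p * (1 - m) * ES.
Proof.
  intros HM Hm Hp Hcond.
  assert (Hpos : 0 < M * p * (1 - m)) by (apply Rmult_lt_0_compat; [apply Rmult_lt_0_compat|]; lra).
  apply Rmult_lt_compat_r with (r := M * p * (1 - m)) in Hcond; [|exact Hpos].
  replace ((M - 1) / (M * p * (1 - m)) * (M * p * (1 - m))) with (M - 1) in Hcond by (field; lra).
  apply Rmult_lt_reg_l with M; [lra|]; rewrite Rinv_r by lra; lra.
Qed.

Theorem mainTheorem3 (K : nat) (D : nat -> nat -> R) (pl : nat -> nat -> R)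
    (M m ES : R) :
  (2 <= K)%nat ->
  stochastic K D ->
  irreducible K D ->
  (forall i, (i < K)%nat -> offspring_law (pl i)) ->
  pl 0%nat 1%nat < 1 ->
  has_mean (pl 0%nat) M ->
  (forall i, (1 <= i < K)%nat -> has_mean (pl i) m) ->
  1 < M -> m < 1 ->
  0 < exit_prob K D ->
  infinite_sum (fun n => INR n * law_S K D n) ES ->
  ES < (M - 1) / (M * exit_prob K D * (1 - m)) ->
  persists_pos_prob K D pl.
Proof.
  intros HK2 HS HI Hlaw _ HM Hm HM1 Hm1 Hp HES Hcond.
  assert (HK : (1 <= K)%nat) by lia.
  assert (Hm0 : 0 <= m) by (apply (has_mean_nonneg (pl 1%nat)); [apply Hlaw | apply Hm]; lia).
  set (X := 1 - exit_prob K D * (1 - m) * ES).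
  assert (HX : / M < X) by (apply inv_lt_of_mean_sojourn_lt; assumption).
  destruct (discounted_exit_weight K D HK HS HI m ES ((X - / M) / 2) (conj Hm0 Hm1) Hp HES
    ltac:(lra)) as [c [N [Hc [Hcm Hy0]]]].
  set (w := hit_gf K D c N) in Hy0; set (y0 := Dmulv K D w 0) in Hy0; fold X in Hy0.
  assert (HMinv : 0 < / M) by (apply Rinv_0_lt_compat; lra).
  apply (persists_of_subsolution K D pl HK HS Hlaw w (fun i => if Nat.eqb i 0 then / y0 else c)).
  - intros j Hj; apply (hit_gf_unit_interval K D HK HS); assumption.
  - intros [|i] Hi; simpl.
    + unfold w at 1; rewrite hit_gf_root; fold y0; rewrite Rinv_l by lra; lra.
    + apply (hit_gf_sink_le K D HK HS); [lra | lia].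
  - intros [|i] Hi; simpl.
    + exists M; split; [exact HM | right].
      rewrite <- (Rinv_inv M); apply Rinv_lt_contravar; [apply Rmult_lt_0_compat|]; lra.
    + exists m; split; [apply Hm; lia | exact Hcm].
  - unfold w; rewrite hit_gf_root; lra.
Qed.
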